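(* Let $1\le k\le n$, let $\mathcal{G}_{k-1}$ be a nearest-neighbor graph of a storage network with node set $\mathcal{N}$ and RTT function $\tau$, and let $\mathcal{H}$ be its extended graph. An uncoded storage scheme admissible on $\mathcal{G}_{k-1}$ exists if and only if the chromatic number of $\mathcal{H}$ satisfies $\chi(\mathcal{H})=k$.
   Context: A storage network consists of $n$ nodes $\mathcal{N}=\{1,\dots,n\}$ and a round-trip-time (RTT) function $\tau:\mathcal{N}\times\mathcal{N}\to\mathbb{R}_{\ge 0}$, symmetric with $\tau(i,i)=0$, and $k\le n$ information files $W_1,\dots,W_k$. An uncoded storage scheme stores at each node $i$ one file $X_i=W_{\sigma(i)}$ for a map $\sigma:\mathcal{N}\to[k]$. For node $i$, $\lambda_0^{(i)}\le\dots\le\lambda_{n-1}^{(i)}$ is the sorted list of $\{\tau(j,i):j\in\mathcal{N}\}$. A nearest-neighbor graph $\mathcal{G}_{k-1}$ is a directed graph on $\mathcal{N}$ in which each node $i$ has incoming edges from exactly $k-1$ other nodes whose RTTs to $i$ are the $k-1$ smallest values $\lambda_1^{(i)},\dots,\lambda_{k-1}^{(i)}$ (ties broken arbitrarily); these $k-1$ nodes are called the neighbors of $i$ (a node reached only by an outgoing edge of $i$ is not a neighbor of $i$). An uncoded scheme is admissible on $\mathcal{G}_{k-1}$ if for every node $i$ and every $j\in[k]$, some node in $\{i\}\cup\{\text{neighbors of } i\}$ stores $W_j$. The extended graph $\mathcal{H}$ of $\mathcal{G}_{k-1}$ is the undirected graph on $\mathcal{N}$ in which two distinct nodes are adjacent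 iff they are joined by a directed edge (in either direction) in $\mathcal{G}_{k-1}$, or they are both neighbors of a common node in $\mathcal{G}_{k-1}$. *)

From HB Require Import structures.
From mathcomp Require Import all_boot all_order all_algebra.
Set Implicit Arguments. Unset Strict Implicit. Unset Printing Implicit Defensive.
Import Order.TTheory GRing.Theory Num.Theory.
Local Open Scope ring_scope.

Definition rtt_function (R : realFieldType) (n : nat) (tau : 'I_n -> 'I_n -> R) :=
  (forall i j, tau i j = tau j i) /\ (forall i, tau i i = 0) /\
  (forall i j, 0 <= tau i j).

(* nb i = set of neighbors of i (the k-1 nodes with edges into i).
   nb is a nearest-neighbor graph G_{k-1}: each i has exactly k-1 neighbors,
   all distinct from i, whose RTTs to i are the k-1 smallest values
   lambda_1^(i),...,lambda_{k-1}^(i), i.e. no non-neighbor (other than i)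
   is strictly closer to i than some neighbor. *)
Definition nn_graph (R : realFieldType) (n k : nat) (tau : 'I_n -> 'I_n -> R)
    (nb : 'I_n -> {set 'I_n}) :=
  forall i : 'I_n,
    [/\ i \notin nb i, #|nb i| = k.-1 &
        forall j l, j \in nb i -> l \notin nb i -> l != i -> tau j i <= tau l i].

Definition admissible (n k : nat) (nb : 'I_n -> {set 'I_n}) (sigma : 'I_n -> 'I_k) :=
  forall (i : 'I_n) (j : 'I_k), exists2 m, m \in i |: nb i & sigma m = j.

Definition ext_adj (n : nat) (nb : 'I_n -> {set 'I_n}) : rel 'I_n :=
  fun x y => (x != y) &&
    [|| x \in nb y, y \in nb x | [exists z, (x \in nb z) && (y \in nb z)]].

Definition colorable (n : nat) (e : rel 'I_n) (c : nat) : bool :=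
  [exists f : {ffun 'I_n -> 'I_c}, [forall x, forall y, e x y ==> (f x != f y)]].

Lemma colorable_n (n : nat) (e : rel 'I_n) : irreflexive e -> colorable e n.
Proof.
move=> irr; apply/existsP; exists [ffun x => x]; apply/forallP=> x; apply/forallP=> y.
apply/implyP=> exy; rewrite !ffunE; apply/eqP=> xy; by rewrite xy irr in exy.
Qed.

Lemma ext_adj_irr (n : nat) (nb : 'I_n -> {set 'I_n}) : irreflexive (ext_adj nb).
Proof. by move=> x; rewrite /ext_adj eqxx. Qed.

Definition chromatic_number (n : nat) (e : rel 'I_n) (irr : irreflexive e) : nat :=
  ex_minn (ex_intro (fun c => colorable e c) n (colorable_n irr)).

Definition chi_ext (n : nat) (nb : 'I_n -> {set 'I_n}) : nat :=
  chromatic_number (@ext_adj_irr n nb).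

From mathcomp Require Import all_boot all_order all_algebra.

(** Two distinct nodes are adjacent in the extended graph exactly when they lie
    in a common closed neighbourhood [i |: nb i], and each closed neighbourhood
    has [k] elements.  Hence a map to ['I_k] is a proper colouring iff it is
    injective, equivalently (by counting) surjective, on every closed
    neighbourhood, i.e. iff it is an admissible scheme; and no proper colouring
    uses fewer than [k] colours. *)

Set Implicit Arguments.
Unset Strict Implicit.
Unset Printing Implicit Defensive.

Definition proper_coloring (n c : nat) (e : rel 'I_n) (f : 'I_n -> 'I_c) :=
  forall x y, e x y -> f x != f y.

Lemma colorableP (n c : nat) (e : rel 'I_n) :
  reflect (exists f : 'I_n -> 'I_c, proper_coloring e f) (colorable e c).
Proof.
apply: (iffP existsP) => [[f /forallP f_proper] | [f f_proper]].
  by exists f => x y exy; move/forallP/(_ y)/implyP: (f_proper x); apply.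
exists [ffun x => f x]; apply/forallP => x; apply/forallP => y.
by apply/implyP => exy; rewrite !ffunE f_proper.
Qed.

Lemma chromatic_numberP (n c : nat) (e : rel 'I_n) (e_irr : irreflexive e) :
  colorable e c -> (forall c', colorable e c' -> c <= c') ->
  chromatic_number e_irr = c.
Proof.
rewrite /chromatic_number => col_c c_min; case: ex_minnP => c' col_c' c'_min.
by apply/eqP; rewrite eqn_leq c'_min ?c_min.
Qed.

Lemma colorable_chromatic_number (n : nat) (e : rel 'I_n) (e_irr : irreflexive e) :
  colorable e (chromatic_number e_irr).
Proof. by rewrite /chromatic_number; case: ex_minnP. Qed.

Lemma in_injective_imsetT (T T' : finType) (f : T -> T') (A : {set T}) :
  #|A| = #|T'| -> {in A &, injective f} <-> f @: A = setT.
Proof.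
move=> cardA; split => [f_inj | fA].
  by apply/eqP; rewrite eqEcard subsetT cardsT card_in_imset // cardA leqnn.
by apply/imset_injP; rewrite fA cardsT cardA.
Qed.

Section ExtendedGraph.

Variables (n : nat) (nb : 'I_n -> {set 'I_n}).

Lemma ext_adjP x y :
  reflect (x != y /\ exists z, x \in z |: nb z /\ y \in z |: nb z)
          (ext_adj nb x y).
Proof.
apply: (iffP andP) => -[x_neq_y adj]; split => //.
  case/or3P: adj => [x_nb_y | y_nb_x | /existsP[z /andP[x_nb_z y_nb_z]]].
  - by exists y; rewrite setU11 setU1r.
  - by exists x; rewrite setU11 setU1r.
  - by exists z; rewrite !setU1r.
move: x_neq_y; case: adj => z [] /setU1P[-> | x_nb_z] /setU1P[-> | y_nb_z].
- by rewrite eqxx.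
- by rewrite y_nb_z orbT.
- by rewrite x_nb_z.
- by move=> _; apply/or3P/Or33/existsP; exists z; rewrite x_nb_z y_nb_z.
Qed.

Lemma proper_coloring_ext_adjE c (f : 'I_n -> 'I_c) :
  proper_coloring (ext_adj nb) f <-> forall z, {in z |: nb z &, injective f}.
Proof.
split => [f_proper z x y x_nb_z y_nb_z fxy | f_inj x y /ext_adjP[x_neq_y [z []]]].
  apply/eqP; apply: contraT => x_neq_y.
  by move: (f_proper x y); rewrite fxy eqxx; apply; apply/ext_adjP; split; last exists z.
by move=> x_nb_z y_nb_z; apply: contra x_neq_y => /eqP/(f_inj z x y x_nb_z y_nb_z)->.
Qed.

Lemma admissibleE k (sigma : 'I_n -> 'I_k) :
  admissible nb sigma <-> forall i, sigma @: (i |: nb i) = setT.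
Proof.
split => [adm i | sigma_onto i j].
  by apply/setP => j; rewrite inE; have [m m_nb_i <-] := adm i j; apply: imset_f.
have /imsetP[m m_nb_i ->] : j \in sigma @: (i |: nb i) by rewrite sigma_onto inE.
by exists m.
Qed.

End ExtendedGraph.

Section NearestNeighborGraph.

Variables (n k : nat) (nb : 'I_n -> {set 'I_n}).
Hypotheses (k_gt0 : 0 < k) (nb_irr : forall i, i \notin nb i)
           (card_nb : forall i, #|nb i| = k.-1).

Lemma card_closed_nb i : #|i |: nb i| = k.
Proof. by rewrite cardsU1 nb_irr card_nb add1n prednK. Qed.

Lemma admissible_proper_coloring (sigma : 'I_n -> 'I_k) :
  admissible nb sigma <-> proper_coloring (ext_adj nb) sigma.
Proof.
have card_eq i : #|i |: nb i| = #|'I_k| by rewrite card_closed_nb card_ord.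
split => [/admissibleE onto | /proper_coloring_ext_adjE inj].
  apply/proper_coloring_ext_adjE => i.
  by apply/(in_injective_imsetT _ (card_eq i))/onto.
by apply/admissibleE => i; apply/(in_injective_imsetT _ (card_eq i))/inj.
Qed.

Lemma proper_coloring_ge (i : 'I_n) c (f : 'I_n -> 'I_c) :
  proper_coloring (ext_adj nb) f -> k <= c.
Proof.
move/proper_coloring_ext_adjE/(_ i)/leq_card_in.
by rewrite card_closed_nb card_ord.
Qed.

End NearestNeighborGraph.

Theorem theorem1 (R : realFieldType) (n k : nat) (tau : 'I_n -> 'I_n -> R)
    (nb : 'I_n -> {set 'I_n}) :
  (1 <= k <= n)%N -> rtt_function tau -> nn_graph k tau nb ->
  (exists sigma : 'I_n -> 'I_k, admissible nb sigma) <-> chi_ext nb = k.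
Proof.
move=> /andP[k_gt0 k_le_n] _ nn.
have nb_irr i : i \notin nb i by have [] := nn i.
have card_nb i : #|nb i| = k.-1 by have [] := nn i.
have node0 : 'I_n := Ordinal (leq_trans k_gt0 k_le_n).
have adm_proper := admissible_proper_coloring k_gt0 nb_irr card_nb.
split => [[sigma /adm_proper sigma_proper] | chi_k].
  apply: chromatic_numberP; first by apply/colorableP; exists sigma.
  by move=> c /colorableP[f]; apply: (proper_coloring_ge k_gt0 nb_irr card_nb node0).
have /colorableP[f f_proper] := colorable_chromatic_number (@ext_adj_irr n nb).
rewrite -/(chi_ext nb) chi_k in f f_proper.
by exists f; apply/adm_proper.
Qed.
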